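(* Consider any run of Algorithm 1 (described in the context) under the standing assumption. The number of unsuccessful iterations that occur before an $(\epsilon_g,\epsilon_H)$-stationary point is reached is either zero or else satisfies \[ |\mathcal{U}|\ \le\ \Big\lfloor 1+\log_{\gamma_1}\Big(\tfrac{3(1-\eta)}{L_H\delta_{\max}}\Big)+\log_{\gamma_1}(\epsilon_H)\Big\rfloor\,|\mathcal{S}|. \]
   Context: Let $f:\mathbb{R}^n\to\mathbb{R}$ with gradient $g=\nabla f$ and Hessian $H=\nabla^2 f$; $\|\cdot\|$ is the Euclidean norm and $\lambda_{\min}(\cdot)$ the smallest eigenvalue of a symmetric matrix. A point $x$ is $(\epsilon_g,\epsilon_H)$-stationary if $\|g(x)\|\le\epsilon_g$ and $\lambda_{\min}(H(x))\ge-\epsilon_H$. Write $f_k=f(x_k)$, $g_k=g(x_k)$, $H_k=H(x_k)$ and $m_k(x):=f_k+g_k^T(x-x_k)+\tfrac12(x-x_k)^TH_k(x-x_k)$. Algorithm 1 (exact trust-region Newton method). Inputs: tolerances $\epsilon_g,\epsilon_H>0$; parameters $\gamma_1\in(0,1)$, $\gamma_2\in[1,\infty)$, $\psi\in(1/\gamma_2,1]$; $x_0\in\mathbb{R}^n$; $\delta_0>0$; $\delta_{\max}\ge\delta_0$; $\eta\in(0,1)$. For $k=0,1,2,\dots$: evaluate $g_k,H_k$; if $\|g_k\|\le\epsilon_g$, compute $\lambda_k=\lambda_{\min}(H_k)$ and, if $\lambda_k\ge-\epsilon_H$, return $x_k$ (terminate). Otherwise compute $s_k$ as a global solution of $\min_{s}\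 m_k(x_k+s)+\tfrac12\epsilon_H\|s\|^2$ subject to $\|s\|\le\delta_k$. Set $\rho_k=\frac{f_k-f(x_k+s_k)}{m_k(x_k)-m_k(x_k+s_k)}$. If $\rho_k\ge\eta$: $x_{k+1}=x_k+s_k$, and $\delta_{k+1}=\min\{\gamma_2\delta_k,\delta_{\max}\}$ if $\|s_k\|\ge\psi\delta_k$, else $\delta_{k+1}=\delta_k$. If $\rho_k<\eta$: $x_{k+1}=x_k$ and $\delta_{k+1}=\gamma_1\|s_k\|$. $\mathcal{K}$ is the set of indices $k$ such that iteration $k$ is completed without termination; $\mathcal{S}=\{k\in\mathcal{K}:\rho_k\ge\eta\}$ (successful), $\mathcal{U}=\{k\in\mathcal{K}:\rho_k<\eta\}$ (unsuccessful). Standing assumption: the sequence $\{f_k\}$ is bounded below by some $f_{\rm low}\in\mathbb{R}$, and all segments $[x_k,x_k+s_k]$ lie in an open set on which $f$ is twice continuously differentiable with gradient Lipschitz continuous with constant $L_g>0$ and Hessian Lipschitz continuous with constant $L_H>0$. *)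

From HB Require Import structures.
From mathcomp Require Import all_boot all_order all_algebra.
From mathcomp Require Import all_classical all_reals all_analysis.
Set Implicit Arguments. Unset Strict Implicit. Unset Printing Implicit Defensive.
Import Order.TTheory GRing.Theory Num.Theory.
Import numFieldNormedType.Exports.
Local Open Scope classical_set_scope.
Local Open Scope ring_scope.

Section TR.
Variables (R : realType) (n : nat).
Notation vec := 'cV[R]_n.
Notation mat := 'M[R]_n.

Definition dotp (u v : vec) : R := \sum_(i < n) u i 0 * v i 0.
Definition enorm (v : vec) : R := Num.sqrt (dotp v v).

Definition lambda_min (A : mat) : R := inf [set a : R | eigenvalue A a].

Definition tr_logb (b y : R) : R := ln y / ln b.

Definition tr_model (f : vec -> R) (g : vec -> vec) (H : vec -> mat) (xk x : vec) : R :=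
  f xk + dotp (g xk) (x - xk) + 2^-1 * dotp (x - xk) (H xk *m (x - xk)).

(* (eps_g, eps_H)-stationarity: the termination test of Algorithm 1 *)
Definition stationary (g : vec -> vec) (H : vec -> mat) (eg eH : R) (x : vec) : Prop :=
  enorm (g x) <= eg /\ - eH <= lambda_min (H x).

Definition smooth_on (f : vec -> R) (g : vec -> vec) (H : vec -> mat)
    (O : set vec) (Lg LH : R) : Prop :=
  open O /\
  (forall x, O x -> differentiable f x /\ forall h, 'd f x h = dotp (g x) h) /\
  (forall x, O x -> differentiable g x /\ forall h, 'd g x h = H x *m h) /\
  {in O, continuous H} /\
  (forall x y, O x -> O y -> enorm (g x - g y) <= Lg * enorm (x - y)) /\
  (forall x y, O x -> O y -> forall v,
     enorm ((H x - H y) *m v) <= LH * enorm (x - y) * enorm v).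

Definition tr_segment (a b : vec) : set vec :=
  [set z | exists t : R, 0 <= t <= 1 /\ z = a + t *: (b - a)].

Definition tr_ratio (f : vec -> R) g H (xk sk : vec) : R :=
  (f xk - f (xk + sk)) / (tr_model f g H xk xk - tr_model f g H xk (xk + sk)).

(* Iteration k is tr_completed (k \in K): no termination at iterations 0..k. *)
Definition tr_completed g H eg eH (x : nat -> vec) (k : nat) : Prop :=
  forall j, (j <= k)%N -> ~ stationary g H eg eH (x j).

(* Iterate x_k is actually produced by the run: iterations 0..k-1 tr_completed. *)
Definition tr_reached g H eg eH (x : nat -> vec) (k : nat) : Prop :=
  forall j, (j < k)%N -> ~ stationary g H eg eH (x j).

(* A run of Algorithm 1 (the exact trust-region Newton method), described by
   the sequences x_k, delta_k, s_k (values beyond termination are irrelevant),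
   together with the tr_standing assumption. *)
Definition TR_run (f : vec -> R) (g : vec -> vec) (H : vec -> mat)
    (eg eH g1 g2 psi d0 dmax eta : R)
    (x : nat -> vec) (delta : nat -> R) (s : nat -> vec) : Prop :=
  0 < eg /\ 0 < eH /\ 0 < g1 < 1 /\ 1 <= g2 /\ g2^-1 < psi <= 1 /\
  0 < d0 /\ d0 <= dmax /\ 0 < eta < 1 /\
  delta 0%N = d0 /\
  (forall k, tr_completed g H eg eH x k ->
     (enorm (s k) <= delta k /\
      forall t, enorm t <= delta k ->
        tr_model f g H (x k) (x k + s k) + 2^-1 * eH * enorm (s k) ^+ 2
        <= tr_model f g H (x k) (x k + t) + 2^-1 * eH * enorm t ^+ 2) /\
     (eta <= tr_ratio f g H (x k) (s k) ->
        x k.+1 = x k + s k /\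
        delta k.+1 = (if psi * delta k <= enorm (s k)
                      then Num.min (g2 * delta k) dmax else delta k)) /\
     (tr_ratio f g H (x k) (s k) < eta ->
        x k.+1 = x k /\ delta k.+1 = g1 * enorm (s k))).

Definition tr_standing (f : vec -> R) g H (eg eH : R) (x : nat -> vec) (s : nat -> vec)
    (Lg LH : R) : Prop :=
  0 < Lg /\ 0 < LH /\
  (exists flow : R, forall k, tr_reached g H eg eH x k -> flow <= f (x k)) /\
  exists O : set vec, smooth_on f g H O Lg LH /\
    forall k, tr_completed g H eg eH x k -> tr_segment (x k) (x k + s k) `<=` O.

Definition has_card (P : nat -> Prop) (m : nat) : Prop :=
  exists l : seq nat, uniq l /\ (forall k, k \in l <-> P k) /\ size l = m.
End TR.

From HB Require Import structures.
From mathcomp Require Import all_boot all_order all_algebra.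
From mathcomp Require Import all_classical all_reals all_analysis.
From mathcomp Require Import ring lra zify.
Import Order.TTheory GRing.Theory Num.Theory.
Import numFieldNormedType.Exports.
Local Open Scope classical_set_scope.
Local Open Scope ring_scope.
Set Implicit Arguments. Unset Strict Implicit. Unset Printing Implicit Defensive.

(* The subproblem solution s_k is nonzero at a nonstationary iterate, and the model decrease
   m_k(x_k) - m_k(x_k + s_k) >= eH/2 |s_k|^2 together with the cubic Taylor bound
   f(x_k + s_k) <= m_k(x_k + s_k) + LH/6 |s_k|^3 shows that iteration k is successful as soon
   as delta_k <= 3 (1 - eta) eH / LH.  An unsuccessful iteration shrinks the radius by the
   factor gamma_1 and the radius never exceeds delta_max, so every block of consecutive
   unsuccessful iterations has length at most
   N = floor (1 + log_gamma1 (3 (1 - eta) / (LH delta_max)) + log_gamma1 eH).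
   No such block ends the run: an unsuccessful iteration leaves x unchanged, so the
   stationarity test fails again.  With finitely many successful iterations the run therefore
   terminates, every block is followed by a successful iteration, and |U| <= N |S|. *)

Section EuclideanNorm.
Variables (R : realType) (n : nat).
Implicit Types (u v w : 'cV[R]_n) (a : R).

Lemma dotpC u v : dotp u v = dotp v u.
Proof. by apply: eq_bigr => i _; rewrite mulrC. Qed.

Lemma dotpDl u v w : dotp (u + v) w = dotp u w + dotp v w.
Proof. by rewrite /dotp -big_split; apply: eq_bigr => i _; rewrite mxE mulrDl. Qed.

Lemma dotpZl a u w : dotp (a *: u) w = a * dotp u w.
Proof. by rewrite /dotp mulr_sumr; apply: eq_bigr => i _; rewrite mxE mulrA. Qed.

Lemma dotpNl u w : dotp (- u) w = - dotp u w.
Proof. by rewrite -scaleN1r dotpZl mulN1r. Qed.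

Lemma dotpBl u v w : dotp (u - v) w = dotp u w - dotp v w.
Proof. by rewrite dotpDl dotpNl. Qed.

Lemma dotpZr a u w : dotp w (a *: u) = a * dotp w u.
Proof. by rewrite dotpC dotpZl dotpC. Qed.

Lemma dotpNr u w : dotp w (- u) = - dotp w u.
Proof. by rewrite dotpC dotpNl dotpC. Qed.

Lemma dotpBr u v w : dotp w (u - v) = dotp w u - dotp w v.
Proof. by rewrite dotpC dotpBl !(dotpC w). Qed.

Lemma dotp0l w : dotp 0 w = 0.
Proof. by rewrite -(scale0r 0) dotpZl mul0r. Qed.

Lemma dotp0r w : dotp w 0 = 0.
Proof. by rewrite dotpC dotp0l. Qed.

Lemma dotp_mulmx u v : dotp u v = (u^T *m v) 0 0.
Proof. by rewrite mxE; apply: eq_bigr => i _; rewrite mxE. Qed.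

Lemma dotpp_ge0 v : 0 <= dotp v v.
Proof. by apply: sumr_ge0 => i _; rewrite -expr2 sqr_ge0. Qed.

Lemma dotpp_eq0 v : (dotp v v == 0) = (v == 0).
Proof.
apply/idP/eqP => [|->]; last by rewrite dotp0l.
rewrite psumr_eq0 => [/allP v0|i _]; last by rewrite -expr2 sqr_ge0.
apply/matrixP => i j; rewrite ord1 mxE; apply/eqP.
by rewrite -sqrf_eq0 expr2; exact: (v0 i (mem_index_enum i)).
Qed.

Lemma enorm_ge0 v : 0 <= enorm v.
Proof. exact: sqrtr_ge0. Qed.

Lemma enorm_sqr v : enorm v ^+ 2 = dotp v v.
Proof. by rewrite sqr_sqrtr // dotpp_ge0. Qed.

Lemma enorm_eq0 v : (enorm v == 0) = (v == 0).
Proof. by rewrite sqrtr_eq0 le_eqVlt ltNge dotpp_ge0 orbF dotpp_eq0. Qed.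

Lemma enorm_gt0 v : (0 < enorm v) = (v != 0).
Proof. by rewrite lt_def enorm_ge0 andbT enorm_eq0. Qed.

Lemma enorm0 : enorm (0 : 'cV[R]_n) = 0.
Proof. by apply/eqP; rewrite enorm_eq0. Qed.

Lemma enormZ a v : enorm (a *: v) = `|a| * enorm v.
Proof. by rewrite /enorm dotpZl dotpZr mulrA -expr2 sqrtrM ?sqr_ge0 // sqrtr_sqr. Qed.

Lemma CauchySchwarz_dotp u v : `|dotp u v| <= enorm u * enorm v.
Proof.
rewrite /enorm -sqrtrM ?dotpp_ge0 // -sqrtr_sqr ler_sqrt ?mulr_ge0 ?dotpp_ge0 //.
have [->|u0] := eqVneq u 0; first by rewrite !dotp0l expr0n mul0r.
have uu_gt0 : 0 < dotp u u by rewrite lt_def dotpp_eq0 u0 dotpp_ge0.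
have := dotpp_ge0 (dotp u u *: v - dotp u v *: u).
rewrite !(dotpBl, dotpBr, dotpZl, dotpZr) (dotpC v u) => h.
have : 0 <= dotp u u * (dotp u u * dotp v v - dotp u v ^+ 2) by nra.
by rewrite pmulr_rge0 // subr_ge0.
Qed.

End EuclideanNorm.

Section Calculus.
Variable R : realType.

Lemma ler_is_derive (F G dF dG : R -> R) (a b : R) : a <= b ->
  {in `[a, b], forall t : R, is_derive t 1 F (dF t)} ->
  {in `[a, b], forall t : R, is_derive t 1 G (dG t)} ->
  {in `[a, b], forall t : R, dF t <= dG t} -> F a <= G a -> F b <= G b.
Proof.
move=> ab DF DG dFG FGa.
have D (t : R) : t \in `[a, b] -> is_derive t 1 (F - G) (dF t - dG t).
  by move=> tab; exact: (is_deriveB (DF t tab) (DG t tab)).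
have Doo (t : R) : t \in `]a, b[ -> is_derive t 1 (F - G) (dF t - dG t).
  by move=> tab; apply: D; exact: subset_itv_oo_cc.
have cont : {within `[a, b], continuous (F - G)}.
  by apply: derivable_within_continuous => t /D /@ex_derive.
have [c cab E] := MVT_segment ab Doo cont.
have : (dF c - dG c) * (b - a) <= 0 by rewrite mulr_le0_ge0 ?subr_le0 ?subr_ge0 ?dFG.
rewrite -E !fctE /=; lra.
Qed.

Lemma taylor_cubic_ub (phi phi1 q : R -> R) (L : R) :
  {in `[0, 1], forall t : R, is_derive t 1 phi (phi1 t)} ->
  {in `[0, 1], forall t : R, is_derive t 1 phi1 (q t)} ->
  {in `[0, 1], forall t : R, q t <= q 0 + L * t} ->
  phi 1 <= phi 0 + phi1 0 + q 0 / 2 + L / 6.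
Proof.
move=> Dphi Dphi1 qL.
have phi1_ub (t : R) : t \in `[0, 1] -> phi1 t <= phi1 0 + q 0 * t + L / 2 * t ^+ 2.
  rewrite in_itv /= => /andP[t0 t1].
  have sub (u : R) : u \in `[0, t] -> u \in `[0, 1].
    by apply: subset_itvl; rewrite bnd_simp.
  pose p := (phi1 0)%:P + q 0 *: 'X + (L / 2) *: 'X^2.
  have Dp : {in `[0, t], forall u : R, is_derive u 1 (horner p) (q 0 + L * u)}.
    by move=> u _; apply: is_derive_eq; rewrite !poly.derivE !hornerE /=; field.
  have := ler_is_derive t0 (fun u ut => Dphi1 u (sub u ut)) Dp
    (fun u ut => qL u (sub u ut)).
  by rewrite !hornerE /= mulr0 !addr0 => /(_ (lexx _)).
pose p := (phi 0)%:P + phi1 0 *: 'X + (q 0 / 2) *: 'X^2 + (L / 6) *: 'X^3.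
have Dp : {in `[0, 1], forall u : R,
    is_derive u 1 (horner p) (phi1 0 + q 0 * u + L / 2 * u ^+ 2)}.
  by move=> u _; apply: is_derive_eq; rewrite !poly.derivE !hornerE /=; field.
have := ler_is_derive ler01 Dphi Dp phi1_ub.
by rewrite !hornerE /= !(mulr0, mul0r, addr0, mulr1) => /(_ (lexx _)).
Qed.

Lemma is_derive_line (V W : normedModType R) (F : V -> W) (x s : V) (t : R) dF :
  is_derive (x + t *: s) s F dF -> is_derive t 1 (fun u : R => F (x + u *: s)) dF.
Proof.
case=> dFx <-.
have shiftE : (fun h : R => h^-1 *: (F (x + (h *: 1 + t) *: s) - F (x + t *: s))) =
    (fun h : R => h^-1 *: (F (h *: s + (x + t *: s)) - F (x + t *: s))).
  by apply/funext => h; rewrite [h *: 1]mulr1 scalerDl addrCA addrA addrC.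
by apply: DeriveDef; rewrite /derivable /derive /= shiftE.
Qed.

End Calculus.

Section Taylor.
Variables (R : realType) (n : nat).
Variables (f : 'cV[R]_n -> R) (g : 'cV[R]_n -> 'cV[R]_n) (H : 'cV[R]_n -> 'M[R]_n).

Lemma tr_model_at xk : tr_model f g H xk xk = f xk.
Proof. by rewrite /tr_model subrr dotp0r dotp0l mulr0 !addr0. Qed.

Lemma tr_model_step xk t :
  tr_model f g H xk (xk + t) = f xk + dotp (g xk) t + 2^-1 * dotp t (H xk *m t).
Proof. by rewrite /tr_model [xk + t - xk]addrAC subrr add0r. Qed.

Variables (O : set 'cV[R]_n) (Lg LH : R).
Hypothesis smooth : smooth_on f g H O Lg LH.

Lemma is_derive_smooth y v : O y -> is_derive y v f (dotp (g y) v).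
Proof.
case: smooth => _ [Df _] /Df[fy dfy].
by apply: DeriveDef; [exact: diff_derivable | rewrite deriveE // dfy].
Qed.

Lemma is_derive_smooth_grad y v : O y ->
  is_derive y v (fun z => dotp (g z) v) (dotp (H y *m v) v).
Proof.
case: smooth => _ [_ [Dg _]] /Dg[gy dgy].
have gyv : derivable g y v := diff_derivable gy.
have Dgi i : is_derive y v (fun z => g z i 0) ((H y *m v) i 0).
  apply: DeriveDef; first by move/derivable_mxP: gyv; apply.
  have := derive_mx gyv; rewrite deriveE // dgy.
  by move=> /(congr1 (fun M : 'cV[R]_n => M i 0)) ->; rewrite mxE.
have -> : (fun z => dotp (g z) v) = \sum_(i < n) v i 0 \*: (fun z => g z i 0).
  by apply/funext => z; rewrite fct_sumE; apply: eq_bigr => i _; rewrite mulrC.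
apply: is_derive_eq (is_derive_sum (fun i => is_deriveZ (v i 0) (Dgi i))) _.
by apply: eq_bigr => i _; rewrite mulrC.
Qed.

Lemma hessian_quad_lipschitz y z v : O y -> O z ->
  dotp (H y *m v) v - dotp (H z *m v) v <= LH * enorm (y - z) * enorm v ^+ 2.
Proof.
case: smooth => _ [_ [_ [_ [_ HL]]]] Oy Oz.
rewrite -dotpBl -mulmxBl; apply: le_trans (ler_norm _) _.
apply: le_trans (CauchySchwarz_dotp _ _) _.
by rewrite expr2 mulrA ler_wpM2r ?enorm_ge0 ?HL.
Qed.

Lemma taylor_cubic_model_ub x s : tr_segment x (x + s) `<=` O ->
  f (x + s) <= tr_model f g H x (x + s) + LH / 6 * enorm s ^+ 3.
Proof.
move=> seg.
have Oline (t : R) : t \in `[0, 1] -> O (x + t *: s).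
  by rewrite in_itv /= => t01; apply: seg; exists t; rewrite [x + s - x]addrAC subrr add0r.
have O0 : O (x + 0 *: s) by apply: Oline; rewrite in_itv /= lexx ler01.
pose phi t := f (x + t *: s).
pose phi1 t := dotp (g (x + t *: s)) s.
pose q t := dotp (H (x + t *: s) *m s) s.
have Dphi : {in `[0, 1], forall t : R, is_derive t 1 phi (phi1 t)}.
  by move=> t /Oline Ot; apply: is_derive_line; exact: is_derive_smooth.
have Dphi1 : {in `[0, 1], forall t : R, is_derive t 1 phi1 (q t)}.
  move=> t /Oline Ot.
  exact: (is_derive_line (F := fun z => dotp (g z) s) (is_derive_smooth_grad s Ot)).
have qL : {in `[0, 1], forall t : R, q t <= q 0 + LH * enorm s ^+ 3 * t}.
  move=> t t01; rewrite -lerBlDl /q scale0r addr0.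
  have -> : LH * enorm s ^+ 3 * t = LH * (t * enorm s) * enorm s ^+ 2 by ring.
  have := hessian_quad_lipschitz s (Oline t t01) O0.
  by rewrite scale0r addr0 addrAC subrr add0r enormZ ger0_norm // (itvP t01).
have := taylor_cubic_ub Dphi Dphi1 qL.
rewrite /phi /phi1 /q tr_model_step !scale0r !scale1r !addr0 (dotpC s).
lra.
Qed.

End Taylor.

Section Stationarity.
Variables (R : realType) (n : nat).

Lemma ge0_slope_of_quadratic (t0 a b : R) : 0 < t0 ->
  (forall t, 0 < t <= t0 -> 0 <= t * a + t ^+ 2 * b) -> 0 <= a.
Proof.
move=> t0_gt0 quad_ge0; rewrite leNgt; apply/negP => a_lt0.
have b1_gt0 : 0 < `|b| + 1 by rewrite ltr_pwDr // normr_ge0.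
pose t := Num.min t0 (- a / (`|b| + 1)).
have t_gt0 : 0 < t by rewrite lt_min t0_gt0 divr_gt0 // oppr_gt0.
have t_le : t * (`|b| + 1) <= - a by rewrite -ler_pdivlMr // ge_min lexx orbT.
have := quad_ge0 t; rewrite t_gt0 ge_min lexx /= => /(_ isT).
have : t ^+ 2 * b <= t ^+ 2 * `|b| by rewrite ler_wpM2l ?sqr_ge0 ?ler_norm.
have : 0 < t ^+ 2 by rewrite exprn_gt0.
nra.
Qed.

Lemma lambda_min_ge (A : 'M[R]_n) (e : R) : 0 <= e ->
  (forall v, 0 <= dotp v (A *m v) + e * dotp v v) -> - e <= lambda_min A.
Proof.
move=> e_ge0 psd; have [[a0 Aa0]|] := pselect (exists a, eigenvalue A a); last first.
  move=> noeig; rewrite /lambda_min (_ : [set a | _] = set0) ?inf0 ?oppr_le0 //.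
  by apply/seteqP; split => a //= Aa; apply: noeig; exists a.
apply: lb_le_inf; first by exists a0.
move=> a /eigenvalueP[u uA u0].
have uu_gt0 : 0 < dotp u^T u^T by rewrite lt_def dotpp_eq0 trmx_eq0 u0 dotpp_ge0.
have uuE : (u *m u^T) 0 0 = dotp u^T u^T by rewrite dotp_mulmx trmxK.
have := psd u^T; rewrite [dotp u^T (_ *m _)]dotp_mulmx trmxK mulmxA uA -scalemxAl mxE.
by rewrite uuE -mulrDl pmulr_lge0 //; lra.
Qed.

End Stationarity.

Section TrustRegionStep.
Variables (R : realType) (n : nat).
Variables (f : 'cV[R]_n -> R) (g : 'cV[R]_n -> 'cV[R]_n) (H : 'cV[R]_n -> 'M[R]_n).
Variables (eg eH : R) (xk : 'cV[R]_n).

Definition tr_reg_model (t : 'cV[R]_n) : R :=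
  tr_model f g H xk (xk + t) + 2^-1 * eH * enorm t ^+ 2.

Definition solves_tr_subproblem (dk : R) (sk : 'cV[R]_n) : Prop :=
  enorm sk <= dk /\ forall t, enorm t <= dk -> tr_reg_model sk <= tr_reg_model t.

Lemma tr_reg_model0 : tr_reg_model 0 = f xk.
Proof. by rewrite /tr_reg_model addr0 tr_model_at enorm0 expr0n mulr0 addr0. Qed.

Lemma tr_reg_modelZ a v : tr_reg_model (a *: v) =
  f xk + a * dotp (g xk) v + a ^+ 2 * (2^-1 * (dotp v (H xk *m v) + eH * dotp v v)).
Proof.
rewrite /tr_reg_model tr_model_step enorm_sqr.
by rewrite -scalemxAr !(dotpZl, dotpZr); ring.
Qed.

Lemma tr_model_decrease dk sk : solves_tr_subproblem dk sk ->
  2^-1 * eH * enorm sk ^+ 2 <= f xk - tr_model f g H xk (xk + sk).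
Proof.
case=> sdk /(_ 0); rewrite enorm0 tr_reg_model0 /tr_reg_model.
by move=> /(_ (le_trans (enorm_ge0 _) sdk)); lra.
Qed.

Lemma stationary_of_zero_step dk : 0 <= eg -> 0 <= eH -> 0 < dk ->
  solves_tr_subproblem dk 0 -> stationary g H eg eH xk.
Proof.
move=> eg_ge0 eH_ge0 dk_gt0 [_ opt].
(* Optimality of 0 against the steps t v, t > 0 small, forces g xk = 0 and H xk + eH I >= 0. *)
pose curv v := 2^-1 * (dotp v (H xk *m v) + eH * dotp v v).
have rad_gt0 (v : 'cV[R]_n) : 0 < dk / (enorm v + 1).
  by rewrite divr_gt0 // ltr_pwDr ?enorm_ge0.
have small v t : 0 < t <= dk / (enorm v + 1) -> 0 <= t * dotp (g xk) v + t ^+ 2 * curv v.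
  move=> /andP[t_gt0]; rewrite ler_pdivlMr ?ltr_pwDr ?enorm_ge0 // => t_le.
  have : enorm (t *: v) <= dk by rewrite enormZ gtr0_norm //; nra.
  by move/opt; rewrite tr_reg_model0 tr_reg_modelZ -addrA lerDl.
have slope_ge0 v : 0 <= dotp (g xk) v := ge0_slope_of_quadratic (rad_gt0 v) (small v).
have g0 : g xk = 0.
  apply/eqP; rewrite -dotpp_eq0 eq_le dotpp_ge0 andbT -oppr_ge0 -dotpNr.
  exact: slope_ge0.
split; first by rewrite g0 enorm0.
apply: lambda_min_ge eH_ge0 _ => v.
have := small v (dk / (enorm v + 1)); rewrite rad_gt0 lexx g0 dotp0l mulr0 add0r.
by move=> /(_ isT); rewrite pmulr_rge0 ?exprn_gt0 // pmulr_rge0 ?invr_gt0.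
Qed.

Lemma tr_step_neq0 dk sk : 0 <= eg -> 0 <= eH -> 0 < dk ->
  ~ stationary g H eg eH xk -> solves_tr_subproblem dk sk -> sk != 0.
Proof.
move=> eg_ge0 eH_ge0 dk_gt0 nstat sol; apply/eqP => sk0; apply: nstat.
by apply: (stationary_of_zero_step (dk := dk)); rewrite // -sk0.
Qed.

Lemma tr_ratio_ge_of_small_radius O Lg LH eta dk sk :
  smooth_on f g H O Lg LH -> tr_segment xk (xk + sk) `<=` O ->
  0 < eH -> 0 < LH -> eta < 1 -> sk != 0 -> solves_tr_subproblem dk sk ->
  dk <= 3 * (1 - eta) * eH / LH -> eta <= tr_ratio f g H xk sk.
Proof.
move=> sm seg eH_gt0 LH_gt0 eta_lt1 sk0 sol dk_le.
have taylor := taylor_cubic_model_ub sm seg.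
have decrease := tr_model_decrease sol.
set e := enorm sk in taylor decrease.
have e_gt0 : 0 < e by rewrite enorm_gt0.
have Le_le : LH * e <= 3 * (1 - eta) * eH.
  by rewrite mulrC -ler_pdivlMr //; apply: le_trans dk_le; case: sol.
have cubic_le : LH / 6 * e ^+ 3 <= (1 - eta) * (2^-1 * eH * e ^+ 2).
  have : 0 <= e ^+ 2 by rewrite sqr_ge0.
  rewrite (exprS e 2); nra.
have eta1_ge0 : 0 <= 1 - eta by rewrite subr_ge0 ltW.
have := ler_wpM2l eta1_ge0 decrease.
rewrite /tr_ratio tr_model_at ler_pdivlMr; last first.
  by apply: lt_le_trans decrease; rewrite !mulr_gt0 ?exprn_gt0 ?invr_gt0.
lra.
Qed.

End TrustRegionStep.

Lemma floor_logb_ge (R : realType) (b c e : R) (j : nat) : 0 < b < 1 -> 0 < c -> 0 < e ->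
  c * e < b ^+ j -> j.+1%:Z <= Num.floor (1 + tr_logb b c + tr_logb b e).
Proof.
move=> /andP[b_gt0 b_lt1] c_gt0 e_gt0 ce_lt.
rewrite floor_ge_int -pmulrn -natr1 [_ + 1]addrC -addrA lerD2l.
rewrite /tr_logb -mulrDl -lnM ?posrE // ler_ndivlMr ?ln_lt0 ?b_gt0 //.
by rewrite mulr_natl -lnXn // ltW // ltr_ln ?posrE ?mulr_gt0 ?exprn_gt0.
Qed.

Fixpoint runlen (P : pred nat) (k : nat) : nat :=
  if k is k'.+1 then (if P k' then (runlen P k').+1 else 0%N) else 0%N.

Lemma runlen_ge (P : pred nat) k m :
  (forall j, (k <= j < k + m)%N -> P j) -> (m <= runlen P (k + m))%N.
Proof.
elim: m => [//|m IHm] Pkm; rewrite addnS /= Pkm ?leq_addr ?addnS //= ltnS.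
by apply: IHm => j /andP[kj jkm]; rewrite Pkm // kj addnS ltnW.
Qed.

Lemma count_le_runlen (PU PS : pred nat) (N k : nat) :
  (forall j, (j < k)%N -> ~~ PU j -> PS j) -> (forall j, (j <= k)%N -> runlen PU j <= N)%N ->
  (count PU (iota 0 k) <= N * count PS (iota 0 k) + runlen PU k)%N.
Proof.
elim: k => [//|k IHk] US runN.
have IH := IHk (fun j jk => US j (ltnW jk)) (fun j jk => runN j (leqW jk)).
have runk := runN k (leqnSn k).
rewrite -addn1 iotaD !count_cat /= add0n addn1 /=.
by case: (boolP (PU k)) => [|/(US k (ltnSn k)) ->] /=; lia.
Qed.

Lemma has_card_count (P : nat -> Prop) (p : pred nat) (K : nat) :
  (forall k, P k <-> (k < K)%N /\ p k) -> has_card P (count p (iota 0 K)).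
Proof.
move=> Pp; exists [seq k <- iota 0 K | p k].
split; first by rewrite filter_uniq ?iota_uniq.
split; last by rewrite size_filter.
by move=> k; rewrite Pp mem_filter mem_iota andbC; split => [/andP[]|[-> ->]].
Qed.

Lemma has_card_inj (P : nat -> Prop) (m m' : nat) : has_card P m -> has_card P m' -> m = m'.
Proof.
move=> [l [ul [Pl <-]]] [l' [ul' [Pl' <-]]]; apply/perm_size/uniq_perm => // k.
by apply/idP/idP => ?; [apply/Pl'/Pl | apply/Pl/Pl'].
Qed.

Lemma first_failure (P : nat -> Prop) : (exists k, ~ P k) ->
  exists K, forall k, (forall j, (j <= k)%N -> P j) <-> (k < K)%N.
Proof.
move=> exP; have exPb : exists k, ~~ `[< P k >] by case: exP => k Pk; exists k; apply/asboolPn.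
case: (ex_minnP exPb) => K /asboolPn notPK Kmin; exists K => k; split.
  by move=> Pk; rewrite ltnNge; apply/negP => /Pk.
move=> kK j jk; apply/asboolP; apply: contraTT jk => /Kmin Kj.
by rewrite -ltnNge (leq_trans kK).
Qed.

Section Run.
Variables (R : realType) (n : nat).
Variables (f : 'cV[R]_n -> R) (g : 'cV[R]_n -> 'cV[R]_n) (H : 'cV[R]_n -> 'M[R]_n).
Variables (eg eH g1 g2 psi dmax eta Lg LH : R) (O : set 'cV[R]_n).
Variables (x : nat -> 'cV[R]_n) (delta : nat -> R) (s : nat -> 'cV[R]_n).

Local Notation completed := (tr_completed g H eg eH x).
Local Notation reached := (tr_reached g H eg eH x).
Local Notation rho k := (tr_ratio f g H (x k) (s k)).
Local Notation unsuccessful k := (completed k /\ rho k < eta).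
Local Notation successful k := (completed k /\ eta <= rho k).
Local Notation PU := (fun k => `[< unsuccessful k >]).
Local Notation PS := (fun k => `[< successful k >]).
Local Notation max_run :=
  (Num.floor (1 + tr_logb g1 (3 * (1 - eta) / (LH * dmax)) + tr_logb g1 eH)).

Hypotheses (eg_gt0 : 0 < eg) (eH_gt0 : 0 < eH) (g1_gt0 : 0 < g1) (g1_lt1 : g1 < 1).
Hypotheses (g2_ge1 : 1 <= g2) (eta_lt1 : eta < 1) (LH_gt0 : 0 < LH).
Hypotheses (delta0_gt0 : 0 < delta 0) (delta0_le : delta 0 <= dmax).
Hypothesis smooth : smooth_on f g H O Lg LH.
Hypothesis segment_sub : forall k, completed k -> tr_segment (x k) (x k + s k) `<=` O.
Hypothesis step_solves :
  forall k, completed k -> solves_tr_subproblem f g H eH (x k) (delta k) (s k).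
Hypothesis successful_radius : forall k, completed k -> eta <= rho k ->
  delta k.+1 = if psi * delta k <= enorm (s k) then Num.min (g2 * delta k) dmax else delta k.
Hypothesis unsuccessful_update : forall k, completed k -> rho k < eta ->
  x k.+1 = x k /\ delta k.+1 = g1 * enorm (s k).

Lemma completed_reached k : completed k -> reached k.
Proof. by move=> ck j jk; apply: ck; exact: ltnW. Qed.

Lemma radius_bounds k : reached k -> 0 < delta k <= dmax.
Proof.
elim: k => [_|k IHk ck]; first by rewrite delta0_gt0 delta0_le.
have /andP[dk_gt0 dk_le] := IHk (completed_reached ck).
have sk0 : s k != 0.
  by apply: tr_step_neq0 (ltW eg_gt0) (ltW eH_gt0) dk_gt0 (ck k (leqnn k)) (step_solves ck).
have [rho_lt|rho_ge] := ltP (rho k) eta.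
  have [_ ->] := unsuccessful_update ck rho_lt.
  rewrite mulr_gt0 ?enorm_gt0 //= (le_trans _ dk_le) // (le_trans _ (step_solves ck).1) //.
  by rewrite ler_piMl ?enorm_ge0 // ltW.
rewrite (successful_radius ck rho_ge); case: ifP => _; last by rewrite dk_gt0 dk_le.
rewrite lt_min ge_min lexx orbT andbT mulr_gt0 ?(lt_le_trans dk_gt0 dk_le) //.
exact: lt_le_trans ltr01 g2_ge1.
Qed.

Lemma unsuccessful_radius_gt k : unsuccessful k -> 3 * (1 - eta) * eH / LH < delta k.
Proof.
move=> [ck rho_lt]; rewrite ltNge; apply: contraTN rho_lt => small; rewrite -leNgt.
have /andP[dk_gt0 _] := radius_bounds (completed_reached ck).
have sk0 := tr_step_neq0 (ltW eg_gt0) (ltW eH_gt0) dk_gt0 (ck k (leqnn k)) (step_solves ck).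
exact: tr_ratio_ge_of_small_radius smooth (segment_sub ck) eH_gt0 LH_gt0 eta_lt1 sk0
  (step_solves ck) small.
Qed.

Lemma unsuccessful_radius_shrink k : unsuccessful k -> delta k.+1 <= g1 * delta k.
Proof.
move=> [ck rho_lt]; have [_ ->] := unsuccessful_update ck rho_lt.
by apply: ler_wpM2l; [exact: ltW | exact: (step_solves ck).1].
Qed.

Lemma runlen_radius K j : reached K -> runlen PU K = j.+1 -> delta K.-1 <= g1 ^+ j * dmax.
Proof.
elim: K j => [//|K IHK] j rK /=; case: ifP => // /asboolP UK [runK].
case: j runK => [_|j runK].
  by rewrite expr0 mul1r; case/andP: (radius_bounds (completed_reached UK.1)).
case: K IHK rK UK runK => [//|K] IHK rK UK runK.
have UK' : unsuccessful K by move: runK => /=; case: asboolP.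
apply: le_trans (unsuccessful_radius_shrink UK') _.
rewrite exprS -mulrA ler_wpM2l ?(ltW g1_gt0) //.
exact: IHK j (completed_reached UK.1) runK.
Qed.

Lemma runlen_le_max_run K : reached K -> (0 < runlen PU K)%N -> (runlen PU K)%:Z <= max_run.
Proof.
case RK: (runlen PU K) => [//|j] rK _; rewrite -RK.
have dK_le := runlen_radius rK RK.
case: K rK RK dK_le => [//|K] rK RK dK_le; rewrite RK.
have UK : unsuccessful K by move: RK => /=; case: asboolP.
have dmax_gt0 : 0 < dmax := lt_le_trans delta0_gt0 delta0_le.
apply: floor_logb_ge; rewrite ?g1_gt0 ?g1_lt1 ?divr_gt0 ?mulr_gt0 ?subr_gt0 //.
have -> : 3 * (1 - eta) / (LH * dmax) * eH = 3 * (1 - eta) * eH / LH / dmax.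
  by field; rewrite !gt_eqF.
by rewrite ltr_pdivrMr //; apply: lt_le_trans (unsuccessful_radius_gt UK) dK_le.
Qed.

Lemma run_terminates M N : (forall k, successful k -> (k < M)%N) ->
  (forall K, reached K -> (runlen PU K <= N)%N) ->
  exists K, forall k, completed k <-> (k < K)%N.
Proof.
move=> SM runN; apply: (first_failure (P := fun j => ~ stationary g H eg eH (x j))).
apply/existsNP => nstat; have := runN (M + N.+1) (fun j _ => nstat j).
apply/negP; rewrite -ltnNge; apply: runlen_ge => j /andP[Mj _]; apply/asboolP.
split; first by move=> i _; exact: nstat.
rewrite ltNge; apply/negP => rho_ge.
by have := SM j (conj (fun i _ => nstat i) rho_ge); rewrite ltnNge Mj.
Qed.

Section Termination.
Variable K : nat.
Hypothesis completedE : forall k, completed k <-> (k < K)%N.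

Lemma reached_termination k : (k <= K)%N -> reached k.
Proof. by move=> kK i ik; apply: (completedE i).2 (leq_trans ik kK) i (leqnn i). Qed.

Lemma runlen_termination : runlen PU K = 0%N.
Proof.
case: K completedE => [//|k] CK /=; case: asboolP => // -[ck rho_lt].
have [xk _] := unsuccessful_update ck rho_lt.
suff /CK : completed k.+1 by rewrite ltnn.
move=> j; rewrite leq_eqVlt ltnS => /orP[/eqP->|]; last exact: ck.
by rewrite xk; exact: ck.
Qed.

Lemma has_card_completed (Q : nat -> Prop) :
  has_card (fun k => completed k /\ Q k)
    (count (fun k => `[< completed k /\ Q k >]) (iota 0 K)).
Proof.
apply: has_card_count => k; rewrite asboolE.
by split => [[ck qk]|[_ []//]]; split => //; exact/completedE.
Qed.

Lemma count_unsuccessful_le N : (forall k, reached k -> (runlen PU k <= N)%N) ->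
  (count PU (iota 0 K) <= N * count PS (iota 0 K))%N.
Proof.
move=> runN.
have US j : (j < K)%N -> ~~ PU j -> PS j.
  move/completedE => cj /asboolPn nU; apply/asboolP.
  by split; rewrite // leNgt; apply/negP => rho_lt; apply: nU.
have := count_le_runlen US (fun j jK => runN j (reached_termination jK)).
by rewrite runlen_termination addn0.
Qed.

End Termination.

Lemma unsuccessful_count :
  has_card (fun k => unsuccessful k) 0 \/
  forall mS, has_card (fun k => successful k) mS ->
    exists mU, has_card (fun k => unsuccessful k) mU /\ mU%:Z <= max_run * mS%:Z.
Proof.
have [[k0 Uk0]|noU] := pselect (exists k, unsuccessful k); last first.
  by left; exists [::]; split=> //; split=> // k; split=> // Uk; case: noU; exists k.
right => mS cardS.
have max_run_ge1 : 1 <= max_run.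
  apply: le_trans (runlen_le_max_run (K := k0.+1) Uk0.1 _); rewrite /= asboolT //.
pose N := `|max_run|%N.
have NE : N%:Z = max_run by rewrite gez0_abs // (le_trans _ max_run_ge1).
have runN k : reached k -> (runlen PU k <= N)%N.
  move=> rk; case Rk: (runlen PU k) => [//|r].
  by rewrite -lez_nat NE -Rk runlen_le_max_run // Rk.
have [M SM] : exists M, forall k, successful k -> (k < M)%N.
  case: cardS => lS [_ [memS _]]; exists (\max_(i <- lS) i.+1) => k /memS kS.
  exact: (leq_bigmax_seq (F := succn) k kS isT).
have [K CK] := run_terminates SM runN.
exists (count PU (iota 0 K)); split; first exact: has_card_completed.
rewrite (has_card_inj cardS (has_card_completed CK _)) -NE -PoszM lez_nat.
exact: count_unsuccessful_le.
Qed.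

End Run.

Unset Implicit Arguments.

Theorem lemma2p5 (R : realType) (n : nat)
    (f : 'cV[R]_n -> R) (g : 'cV[R]_n -> 'cV[R]_n) (H : 'cV[R]_n -> 'M[R]_n)
    (eg eH g1 g2 psi d0 dmax eta Lg LH : R)
    (x : nat -> 'cV[R]_n) (delta : nat -> R) (s : nat -> 'cV[R]_n) :
  TR_run f g H eg eH g1 g2 psi d0 dmax eta x delta s ->
  tr_standing f g H eg eH x s Lg LH ->
  let U := fun k => tr_completed g H eg eH x k /\ tr_ratio f g H (x k) (s k) < eta in
  let S := fun k => tr_completed g H eg eH x k /\ eta <= tr_ratio f g H (x k) (s k) in
  has_card U 0 \/
  forall mS, has_card S mS ->
    exists mU, has_card U mU /\
      (mU%:Z <= Num.floor (1 + tr_logb g1 (3 * (1 - eta) / (LH * dmax)) + tr_logb g1 eH)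
                * mS%:Z)%R.
Proof.
move=> run standing U S.
case: run => eg_gt0 [eH_gt0 [/andP[g1_gt0 g1_lt1] [g2_ge1 [_ [d0_gt0 [d0_le run]]]]]].
case: run => /andP[_ eta_lt1] [delta0 iter].
case: standing => _ [LH_gt0 [_ [dom [smooth segment_sub]]]].
rewrite -delta0 in d0_gt0 d0_le.
exact: (unsuccessful_count eg_gt0 eH_gt0 g1_gt0 g1_lt1 g2_ge1 eta_lt1 LH_gt0 d0_gt0 d0_le
  smooth segment_sub (fun k ck => (iter k ck).1) (fun k ck succ => ((iter k ck).2.1 succ).2)
  (fun k ck => (iter k ck).2.2)).
Qed.
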